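(* Let $(\mathbb Q;+,1,\neq)$ be the structure on the rationals where $+$ is the ternary relation $\{(x,y,z):x+y=z\}$, $1$ is the constant $1$, and $\neq$ is the binary disequality relation. Then every $\omega$-polymorphism of $(\mathbb Q;+,1,\neq)$ is a projection.
   Context: An $\omega$-polymorphism of a structure $\mathfrak A$ is a homomorphism $\mathfrak A^\kappa\to\mathfrak A$ from a direct power with $\kappa\le\omega$ (relations and constants interpreted coordinatewise). A projection is a map $A^\kappa\to A$ of the form $\bar x\mapsto x_i$. *)

From mathcomp Require Import all_boot all_algebra.
Set Implicit Arguments. Unset Strict Implicit. Unset Printing Implicit Defensive.
Import GRing.Theory.
Local Open Scope ring_scope.

Definition plus_rel (x y z : rat) : Prop := x + y = z.
Definition neq_rel (x y : rat) : Prop := x <> y.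

Definition is_power_hom (I : Type) (f : (I -> rat) -> rat) : Prop :=
  [/\ (forall x y z : I -> rat,
         (forall i, plus_rel (x i) (y i) (z i)) -> plus_rel (f x) (f y) (f z)),
      f (fun _ => 1) = 1
    & (forall x y : I -> rat,
         (forall i, neq_rel (x i) (y i)) -> neq_rel (f x) (f y))].

Definition is_projection (I : Type) (f : (I -> rat) -> rat) : Prop :=
  exists i : I, forall x : I -> rat, f x = x i.

(* Additivity
   and f 1 = 1 make f the identity on constant tuples, so preserving
   disequality forces f x to be a coordinate of x; in particular f sends
   0/1-indicators to 0 or 1.  Call a set of indices large when f sends its
   indicator to 1: largeness is upward closed, exactly one of a set and its
   complement is large, and the level set {j | x j = f x} is always large.
   For an injective d : I -> Q the level set of d is a singleton {i0}, so every
   set containing i0 is large, and f x = x i0 since otherwise the complement of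
   the level set of x would be large too. *)

From HB Require Import structures.
From mathcomp Require Import all_boot all_algebra.
From Stdlib Require Import Classical.
Import GRing.Theory Num.Theory.
Local Open Scope ring_scope.

Definition indicator {I : Type} (P : pred I) : I -> rat := fun j => (P j)%:R.

Section PowerHom.
Variables (I : Type) (f : (I -> rat) -> rat).
Hypothesis f_hom : is_power_hom f.

Lemma power_homD x y z : (forall i, x i + y i = z i) -> f x + f y = f z.
Proof. by case: f_hom => fD _ _; apply: fD. Qed.

Lemma power_hom_neq x y : (forall i, x i <> y i) -> f x <> f y.
Proof. by case: f_hom => _ _ f_neq; apply: f_neq. Qed.

Lemma power_hom1 : f (fun _ => 1) = 1.
Proof. by case: f_hom. Qed.

Definition on_constants (c : rat) : rat := f (fun _ => c).

Lemma on_constants_is_nmod_morphism : nmod_morphism on_constants.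
Proof.
have fD c d : on_constants c + on_constants d = on_constants (c + d).
  exact: power_homD.
split=> //; apply: (addrI (on_constants 0)).
by rewrite addr0 fD addr0.
Qed.

HB.instance Definition _ := GRing.isNmodMorphism.Build rat rat on_constants
  on_constants_is_nmod_morphism.

Lemma power_hom_const c : f (fun _ => c) = c.
Proof.
have den_neq0 : (denq c)%:~R != 0 :> rat by rewrite intr_eq0 denq_neq0.
apply: (mulIf den_neq0); rewrite !mulrzr -[f _]/(on_constants c) -raddfMz.
rewrite -mulrzr -numqE -[_%:~R]mul1r mulrzr raddfMz.
by rewrite /= /on_constants power_hom1.
Qed.

Lemma power_hom_in_coords x : exists i, x i = f x.
Proof.
apply: NNPP => not_coord; apply: (@power_hom_neq x (fun _ => f x)).
  by move=> i x_i; apply: not_coord; exists i.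
by rewrite power_hom_const.
Qed.

Lemma power_hom_indicator (P : pred I) : exists b : bool, f (indicator P) = b%:R.
Proof. by have [i <-] := power_hom_in_coords (indicator P); exists (P i). Qed.

Lemma power_hom_indicatorC (P : pred I) :
  f (indicator P) + f (indicator (predC P)) = 1.
Proof.
rewrite (power_homD _ _ (fun _ => 1)) ?power_hom1 // => i.
by rewrite /indicator /=; case: (P i).
Qed.

Lemma power_hom_indicator_mono (S P : pred I) :
  (forall j, S j -> P j) -> f (indicator S) = 1 -> f (indicator P) = 1.
Proof.
move=> SP fS.
have fSD :
    f (indicator S) + f (indicator (fun j => P j && ~~ S j)) = f (indicator P).
  apply: power_homD => j; rewrite /indicator.
  by case S_j: (S j); [rewrite SP | rewrite andbT add0r].
move: fSD; rewrite fS.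
have [b ->] := power_hom_indicator (fun j => P j && ~~ S j).
have [c ->] := power_hom_indicator P.
by case: b c => [] [].
Qed.

(* The level set of [x] at [f x] is seen by [f]: otherwise adding its indicator
   to [x] would not change [f x], yet would make [f x] no longer a coordinate. *)
Lemma power_hom_level_set x : f (indicator (fun j => x j == f x)) = 1.
Proof.
have [[] // fL] := power_hom_indicator (fun j => x j == f x).
have [j] := power_hom_in_coords (fun j => x j + indicator (fun j => x j == f x) j).
rewrite -(power_homD x (indicator _) _ (fun _ => erefl)) fL addr0 /indicator.
case: eqP => [-> /eqP|x_j]; last by rewrite addr0.
by rewrite addrC -subr_eq0 addrK oner_eq0.
Qed.

Theorem power_hom_is_projection (d : I -> rat) : injective d -> is_projection f.
Proof.
move=> d_inj; have [i0 d_i0] := power_hom_in_coords d.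
exists i0 => x; apply/eqP; apply: contraT; rewrite eq_sym => x_i0.
have C_level : f (indicator (predC (fun j => x j == f x))) = 1.
  apply: power_hom_indicator_mono (power_hom_level_set d) => j.
  by rewrite -d_i0 => /eqP /d_inj ->.
have := power_hom_indicatorC (fun j => x j == f x).
by rewrite C_level power_hom_level_set.
Qed.

End PowerHom.

Theorem lemma9 :
  (forall (n : nat) (f : ('I_n -> rat) -> rat),
      is_power_hom f -> is_projection f)
  /\ (forall f : (nat -> rat) -> rat, is_power_hom f -> is_projection f).
Proof.
split=> [n f f_hom | f f_hom].
  apply: (@power_hom_is_projection _ f f_hom (fun i => (val i)%:R)) => i j.
  by move/(mulrIn (oner_neq0 _)) /val_inj.
exact: (@power_hom_is_projection _ f f_hom _ (mulrIn (oner_neq0 _))).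
Qed.
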